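(* For each $N\ge1$ let $\{a_n\}_{n=0}^{N-1},\{b_n\}_{n=0}^{N-1},\{c_n\}_{n=1}^{N}$ (depending on $N$) be real sequences with $c_n>0$, $a_{N-1}=0$, $b_{N-1}=\tfrac12$, $c_N=1$, satisfying for $n=1,\dots,N-1$ $$a_{n-1}=a_n\Big(\frac{1}{c_n^2+1}\Big)^{1/2}+b_n\Big(\frac{1}{c_n^2+1}\Big)^{3/2}c_n^2,\quad b_{n-1}=b_n\Big(\frac{1}{c_n^2+1}\Big)^{3/2}+\frac{c_n}{c_n^2+1},\quad -3b_nc_n+(c_n^2+1)^{1/2}(1-c_n^2)=0,$$ and with $\Delta t_N=1/N$, $\Sigma_0>0$, $\sigma_u>0$ define $\Sigma_n=\Sigma_{n-1}/(1+c_n^2)$, $\beta_n=c_n\sigma_u\Delta t_N^{1/2}\Sigma_{n-1}^{-1/2}$, $\lambda_n=\beta_n\Sigma_{n-1}/(\beta_n^2\Sigma_{n-1}+\sigma_u^2\Delta t_N)$ for $n=1,\dots,N$. Then for every $t\in(0,1)$, as $N\to\infty$: $c_{[Nt]}\to0$, $b_{[Nt]}\to\infty$, $a_{[Nt]}\to\infty$, and $$\frac{c_{[Nt]}}{\Delta t_N^{1/2}}\to\frac{\sqrt3}{3}\frac{1}{(1-t)^{1/2}},\quad b_{[Nt]}\Delta t_N^{1/2}\to\frac{\sqrt3}{3}(1-t)^{1/2},\quad a_{[Nt]}\Delta t_N^{1/2}\to\frac{\sqrt3}{6}(1-t)^{1/2},$$ $$\Sigma_{[Nt]}\to(1-t)^{1/3}\Sigma_0,\qquad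 \lambda_{[Nt]}\to\frac{\sqrt3\,\Sigma_0^{1/2}}{3(1-t)^{1/3}\sigma_u},\qquad \frac{\beta_{[Nt]}}{\Delta t_N}\to\frac{\sqrt3\,\sigma_u}{3(1-t)^{2/3}\Sigma_0^{1/2}}.$$
   Context: $[x]$ denotes the integer part of $x$. These sequences describe the equilibrium of the risk-seeking insider model (Model 3) of an $N$-period Kyle-type insider trading model, where $\Sigma_n$ is the conditional variance of the asset value after $n$ rounds, $\lambda_n$ the liquidity parameter and $\beta_n$ the insider's trading intensity; the claim concerns only the sequences as defined here. *)

From Stdlib Require Import Reals Lra Lia ZArith.
From Coquelicot Require Import Coquelicot.
Open Scope R_scope.

Definition dt (N : nat) : R := / INR N.

(* [N t] : integer part of N t (t > 0, so N t >= 0) *)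
Definition idx (N : nat) (t : R) : nat := Z.to_nat (Int_part (INR N * t)).

Fixpoint Sigma (S0 : R) (c : nat -> R) (n : nat) : R :=
  match n with
  | O => S0
  | S m => Sigma S0 c m / (1 + (c (S m))^2)
  end.

Definition beta (N : nat) (S0 su : R) (c : nat -> R) (n : nat) : R :=
  c n * su * sqrt (dt N) / sqrt (Sigma S0 c (n - 1)%nat).

Definition lambda (N : nat) (S0 su : R) (c : nat -> R) (n : nat) : R :=
  beta N S0 su c n * Sigma S0 c (n - 1)%nat /
  ((beta N S0 su c n)^2 * Sigma S0 c (n - 1)%nat + su^2 * dt N).

From Stdlib Require Import Reals Lra Lia ZArith.
From Coquelicot Require Import Coquelicot.
Open Scope R_scope.

(* The step equations can be solved explicitly: with u = c_n^2 they force
   b_n^2 = (1+u)(1-u)^2/(9u) and b_(n-1)^2 = (1+2u)^2/(9u(1+u)^2), so that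
   b_(n-1)^2 - b_n^2 = 1/3 - O(u^2) and u b_n^2 <= 1/9.  Summing backwards from
   b_(N-1) = 1/2 gives b_n^2 = (N-1-n)/3 + O(1), hence b_[Nt] ~ sqrt (N(1-t)/3), and the
   first-order condition 3 b_n c_n = sqrt (1+u) (1-u) then gives c_[Nt] ~ 1/(3 b_[Nt]).
   The quantity |a_n - b_n/2| + 1/b_n does not increase as n decreases, so a = b/2 + O(1).
   Finally Sigma_n^3 / b_n^2 stays between S0^3/b_0^2 and S0^3/b_0^2 exp (8/b_n^2), so
   Sigma_[Nt]^3 -> S0^3 (1-t); the limits of beta and lambda are algebraic consequences. *)

Lemma step_closed_form (an bn am bm c : R) : 0 < c ->
  am = an * sqrt (1 / (c^2 + 1)) + bn * (sqrt (1 / (c^2 + 1)))^3 * c^2 ->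
  bm = bn * (sqrt (1 / (c^2 + 1)))^3 + c / (c^2 + 1) ->
  - 3 * bn * c + sqrt (c^2 + 1) * (1 - c^2) = 0 ->
  bn = sqrt (c^2 + 1) * (1 - c^2) / (3 * c) /\
  bm = (1 + 2 * c^2) / (3 * c * (1 + c^2)) /\
  am - bm / 2 = (an - bn / 2) / sqrt (c^2 + 1) - c^3 / (2 * (1 + c^2)).
Proof.
  intros Hc Ha Hb Hfoc.
  set (s := sqrt (c^2 + 1)) in *.
  assert (Hs : 0 < s) by (apply sqrt_lt_R0; nra).
  assert (Hss : s * s = c^2 + 1) by (apply sqrt_sqrt; nra).
  assert (Hinv : sqrt (1 / (c^2 + 1)) = / s).
  { unfold s; rewrite <- sqrt_inv; f_equal; field; nra. }
  rewrite Hinv in Ha, Hb; clearbody s.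
  assert (Ebn : bn = s * (1 - c^2) / (3 * c)).
  { apply (Rmult_eq_reg_r (3 * c)); [field_simplify; lra | lra]. }
  assert (Ebm : bm = (1 + 2 * c^2) / (3 * c * (1 + c^2))).
  { rewrite Hb, Ebn; replace (1 + c^2) with (s * s) by lra; rewrite <- Hss; field; lra. }
  split; [exact Ebn | split; [exact Ebm |]].
  rewrite Ha, Ebm, Ebn; replace (1 + c^2) with (s * s) by lra.
  field_simplify_eq; [| lra ..].
  replace (s^2) with (c^2 + 1) by (rewrite <- Hss; ring); ring.
Qed.

Definition b_sq_of (u : R) : R := (1 + u) * (1 - u)^2 / (9 * u).
Definition b_prev_sq_of (u : R) : R := (1 + 2 * u)^2 / (9 * u * (1 + u)^2).

Lemma step_b_sq (bn bm c : R) : 0 < c ->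
  bn = sqrt (c^2 + 1) * (1 - c^2) / (3 * c) ->
  bm = (1 + 2 * c^2) / (3 * c * (1 + c^2)) ->
  bn^2 = b_sq_of (c^2) /\ bm^2 = b_prev_sq_of (c^2).
Proof.
  intros Hc -> ->; unfold b_sq_of, b_prev_sq_of; split.
  - unfold Rdiv; rewrite !Rpow_mult_distr, pow2_sqrt by nra; field; lra.
  - field; nra.
Qed.

Lemma step_c_sq_lt_1 (bn c : R) : 0 < c -> 0 < bn ->
  bn = sqrt (c^2 + 1) * (1 - c^2) / (3 * c) -> c^2 < 1.
Proof.
  intros Hc Hbn Ebn.
  assert (Hs : 0 < sqrt (c^2 + 1)) by (apply sqrt_lt_R0; nra).
  assert (0 < sqrt (c^2 + 1) * (1 - c^2)).
  { rewrite Ebn in Hbn; apply (Rmult_lt_reg_r (/ (3 * c))); [apply Rinv_0_lt_compat; lra | lra]. }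
  nra.
Qed.

Lemma b_sq_gap (u : R) : 0 < u ->
  b_prev_sq_of u - b_sq_of u = 1/3 - u^2 * (1 + u + u^2) / (9 * (1 + u)^2).
Proof. intros Hu; unfold b_sq_of, b_prev_sq_of; field; lra. Qed.

Lemma b_sq_gap_bounds (u : R) : 0 < u < 1 ->
  b_sq_of u + 1/4 <= b_prev_sq_of u /\
  b_sq_of u + 1/3 - u^2/3 <= b_prev_sq_of u <= b_sq_of u + 1/3.
Proof.
  intros Hu; pose proof (b_sq_gap u ltac:(lra)) as Egap.
  set (r := u^2 * (1 + u + u^2) / (9 * (1 + u)^2)) in Egap.
  assert (Hr0 : 0 <= r) by (apply Rle_mult_inv_pos; nra).
  assert (Hr1 : r <= 1/12).
  { apply Rle_div_l; [nra |]. assert (u^2 <= u) by nra. assert (u^3 <= u^2) by nra. nra. }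
  assert (Hr2 : r <= u^2/3).
  { apply Rle_div_l; [nra |]. assert (0 <= u^3) by (apply pow_le; lra). nra. }
  lra.
Qed.

Lemma b_prev_sq_ratio_bounds (u : R) : 0 < u <= 4/9 ->
  b_sq_of u * (1 + u)^3 <= b_prev_sq_of u <= b_sq_of u * (1 + u)^3 * (1 + 60 * u^3).
Proof.
  intros Hu.
  assert (E : b_prev_sq_of u - b_sq_of u * (1 + u)^3 =
              u^3 * (4 + 10*u + 4*u^2 - 4*u^3 - 4*u^4 - u^5) / (9 * u * (1 + u)^2)).
  { unfold b_sq_of, b_prev_sq_of; field; lra. }
  assert (E' : b_sq_of u * (1 + u)^3 * (60 * u^3) =
               u^3 * ((1 + u)^6 * (1 - u)^2 * 60) / (9 * u * (1 + u)^2)).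
  { unfold b_sq_of; field; lra. }
  assert (Hu2 : u^2 <= u) by nra. assert (Hu3 : u^3 <= u^2) by nra.
  assert (Hu4 : u^4 <= u^3) by nra. assert (Hu5 : u^5 <= u^4) by nra.
  assert (Hd : 0 < 9 * u * (1 + u)^2) by nra.
  assert (Hu3p : 0 < u^3) by (apply pow_lt; lra).
  split.
  - assert (0 <= u^3 * (4 + 10*u + 4*u^2 - 4*u^3 - 4*u^4 - u^5) / (9 * u * (1 + u)^2))
      by (apply Rle_mult_inv_pos; nra).
    lra.
  - assert (H6 : 1 <= (1 + u)^6) by (apply pow_R1_Rle; lra).
    assert (18 <= (1 + u)^6 * (1 - u)^2 * 60) by nra.
    assert (u^3 * (4 + 10*u + 4*u^2 - 4*u^3 - 4*u^4 - u^5) / (9 * u * (1 + u)^2)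
            <= u^3 * ((1 + u)^6 * (1 - u)^2 * 60) / (9 * u * (1 + u)^2)).
    { apply Rmult_le_compat_r; [left; apply Rinv_0_lt_compat; lra | nra]. }
    lra.
Qed.

Lemma mul_b_sq_of_le (u : R) : 0 < u < 1 -> u * b_sq_of u <= 1/9.
Proof.
  intros Hu; unfold b_sq_of.
  replace (u * ((1 + u) * (1 - u)^2 / (9 * u))) with ((1 + u) * (1 - u)^2 / 9) by (field; lra).
  nra.
Qed.

Lemma abs_step_le (x y c : R) : 0 < c ->
  y = x / sqrt (c^2 + 1) - c^3 / (2 * (1 + c^2)) -> Rabs y <= Rabs x + c^3 / 2.
Proof.
  intros Hc ->.
  assert (Hs : 1 <= sqrt (c^2 + 1)) by (rewrite <- sqrt_1 at 1; apply sqrt_le_1_alt; nra).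
  assert (Hc3 : 0 < c^3) by (apply pow_lt; lra).
  eapply Rle_trans; [apply Rabs_triang |]; rewrite Rabs_Ropp.
  apply Rplus_le_compat.
  - unfold Rdiv; rewrite Rabs_mult, Rabs_inv, (Rabs_right (sqrt _)) by lra.
    apply Rle_div_l; [lra |]; pose proof (Rabs_pos x); nra.
  - rewrite Rabs_right by (apply Rle_ge, Rle_mult_inv_pos; nra).
    apply Rle_div_l; nra.
Qed.

Lemma potential_step (X Y u : R) : 1/4 <= X -> X + 1/4 <= Y -> 0 <= u -> u * X <= 1/9 ->
  X + 1/3 - u^2/3 <= Y -> X - (1/20) / X + 1/3 <= Y - (1/20) / Y.
Proof.
  intros HX HXY Hu HuX Hgap.
  assert (A : (Y - X - 1/3) * (243 * X^2) >= -1).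
  { assert (u^2 * X^2 <= 1/81)
      by (replace (u^2 * X^2) with ((u * X)^2) by ring; assert (0 <= u * X) by nra; nra).
    assert (0 <= (Y - X - 1/3 + u^2/3) * X^2) by (apply Rmult_le_pos; nra).
    nra. }
  assert (B : 243 * X * (Y - X) >= 20 * Y) by nra.
  assert (E : (X - (1/20) / X + 1/3) - (Y - (1/20) / Y) =
     - (((Y - X - 1/3) * (243 * X^2) + 1) + (243 * X * (Y - X) - 20 * Y) / (20 * Y)) / (243 * X^2))
    by (field; lra).
  assert (0 <= (243 * X * (Y - X) - 20 * Y) / (20 * Y)) by (apply Rle_mult_inv_pos; lra).
  assert (0 <= (((Y - X - 1/3) * (243 * X^2) + 1) + (243 * X * (Y - X) - 20 * Y) / (20 * Y))
               / (243 * X^2)) by (apply Rle_mult_inv_pos; nra).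
  lra.
Qed.

Lemma cube_half_le_inv_sub (bn bm c : R) : 0 < bn -> 0 < bm -> 0 < c ->
  1/4 <= bn^2 -> bn^2 + 1/4 <= bm^2 <= bn^2 + 1/3 -> c^2 * bn^2 <= 1/9 ->
  c^3 / 2 <= / bn - / bm.
Proof.
  intros Hbn Hbm Hc Hbn2 [Hlo Hhi] Hbc.
  assert (Hbm2 : bm <= 2 * bn) by nra.
  assert (Hd : (bm - bn) * bn >= 1/12) by nra.
  assert (Hcb : c * bn <= 1/3) by nra.
  assert (Hw : (c * bn)^3 <= (1/3)^3) by (apply pow_incr; split; nra).
  assert (bn^3 * (c^3 / 2) <= 1/54)
    by (replace (bn^3 * (c^3 / 2)) with ((c * bn)^3 / 2) by field; lra).
  assert (1/24 <= bn^3 * (/ bn - / bm)).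
  { replace (bn^3 * (/ bn - / bm)) with (((bm - bn) * bn) * (bn / bm)) by (field; lra).
    assert (1/2 <= bn / bm) by (apply (Rle_div_r (1/2) bn bm); lra).
    nra. }
  assert (0 < bn^3) by (apply pow_lt; lra).
  nra.
Qed.

Lemma sixty_cube_le_inv_sub (X Y u : R) : 1/4 <= X -> X + 1/4 <= Y <= X + 1/3 ->
  0 <= u < 1 -> u * X <= 1/9 -> 60 * u^3 <= 8 * (/ X - / Y).
Proof.
  intros HX [Hlo Hhi] Hu HuX.
  assert (u^2 * X^2 <= 1/81)
    by (replace (u^2 * X^2) with ((u * X)^2) by ring; assert (0 <= u * X) by nra; nra).
  assert (u^3 <= u^2) by nra.
  assert (3/28 <= X^2 * (/ X - / Y)).
  { replace (X^2 * (/ X - / Y)) with ((Y - X) * (X / Y)) by (field; lra).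
    assert (3/7 <= X / Y) by (apply (Rle_div_r (3/7) X Y); lra).
    nra. }
  nra.
Qed.

Lemma exp_le_compat (x y : R) : x <= y -> exp x <= exp y.
Proof. intros [Hlt | ->]; [left; apply exp_increasing, Hlt | right; reflexivity]. Qed.

(* [Sigma] shrinks by the factor [1 + u] while [b^2] grows by about [(1 + u)^3]; the
   weight [exp (-8/X)] absorbs the error factor [1 + 60 u^3]. *)
Lemma Sigma_potential_step (S X Y u : R) : 0 < S -> 0 < X -> 0 < u ->
  X * (1 + u)^3 <= Y <= X * (1 + u)^3 * (1 + 60 * u^3) -> 60 * u^3 <= 8 * (/ X - / Y) ->
  S^3 / Y <= (S / (1 + u))^3 / X /\
  (S / (1 + u))^3 / X * exp (- (8 / X)) <= S^3 / Y * exp (- (8 / Y)).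
Proof.
  intros HS HX Hu [HYlo HYhi] Hexp.
  assert (Hk : 0 < (1 + u)^3) by (apply pow_lt; lra).
  assert (Hu3 : 0 < u^3) by (apply pow_lt; lra).
  assert (HY : 0 < Y) by nra.
  assert (HS3 : 0 < S^3) by (apply pow_lt; lra).
  replace ((S / (1 + u))^3 / X) with (S^3 / (X * (1 + u)^3)) by (field; lra).
  split.
  { apply Rmult_le_compat_l; [lra |]; apply Rinv_le_contravar; nra. }
  assert (A : S^3 / (X * (1 + u)^3) <= S^3 / Y * (1 + 60 * u^3)).
  { replace (S^3 / Y * (1 + 60 * u^3)) with (S^3 / (Y / (1 + 60 * u^3))) by (field; lra).
    apply Rmult_le_compat_l; [lra |]; apply Rinv_le_contravar.
    - apply Rdiv_lt_0_compat; lra.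
    - apply Rle_div_l; lra. }
  assert (B : (1 + 60 * u^3) * exp (- (8 / X)) <= exp (- (8 / Y))).
  { eapply Rle_trans; [apply Rmult_le_compat_r; [left; apply exp_pos | apply exp_ineq1_le] |].
    rewrite <- exp_plus; apply exp_le_compat; lra. }
  assert (0 < exp (- (8 / X))) by apply exp_pos.
  assert (0 <= S^3 / Y) by (apply Rle_mult_inv_pos; lra).
  apply Rle_trans with (S^3 / Y * (1 + 60 * u^3) * exp (- (8 / X))).
  - apply Rmult_le_compat_r; lra.
  - rewrite Rmult_assoc; apply Rmult_le_compat_l; lra.
Qed.

Lemma Sigma_pos (S0 : R) (c : nat -> R) (n : nat) : 0 < S0 -> 0 < Sigma S0 c n.
Proof. intros HS; induction n as [| n IH]; simpl; [exact HS | apply Rdiv_lt_0_compat; nra]. Qed.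

Lemma telescope_from_last (N : nat) (f : nat -> R) (d : R) :
  (forall n, (1 <= n <= N - 1)%nat -> f n + d <= f (n - 1)%nat) ->
  forall n, (n <= N - 1)%nat -> f (N - 1)%nat + INR (N - 1 - n) * d <= f n.
Proof.
  intros Hstep n Hn; remember (N - 1 - n)%nat as k eqn:Hk; revert n Hn Hk.
  induction k as [| k IH]; intros n Hn Hk.
  - replace n with (N - 1)%nat by lia; simpl; lra.
  - specialize (IH (S n) ltac:(lia) ltac:(lia)).
    specialize (Hstep (S n) ltac:(lia)); rewrite Nat.sub_succ, Nat.sub_0_r in Hstep.
    rewrite S_INR; lra.
Qed.

Lemma le_first_of_steps (N : nat) (f : nat -> R) :
  (forall n, (1 <= n <= N - 1)%nat -> f n <= f (n - 1)%nat) ->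
  forall n, (n <= N - 1)%nat -> f n <= f 0%nat.
Proof.
  intros Hstep n; induction n as [| n IH]; intros Hn; [lra |].
  specialize (Hstep (S n) ltac:(lia)); rewrite Nat.sub_succ, Nat.sub_0_r in Hstep.
  specialize (IH ltac:(lia)); lra.
Qed.

Definition equilibrium_recursion (a b c : nat -> R) (N : nat) : Prop :=
  (forall n : nat, (1 <= n <= N)%nat -> 0 < c n) /\
  a (N - 1)%nat = 0 /\
  b (N - 1)%nat = 1 / 2 /\
  c N = 1 /\
  (forall n : nat, (1 <= n <= N - 1)%nat ->
     a (n - 1)%nat =
       a n * sqrt (1 / ((c n)^2 + 1)) + b n * (sqrt (1 / ((c n)^2 + 1)))^3 * (c n)^2 /\
     b (n - 1)%nat = b n * (sqrt (1 / ((c n)^2 + 1)))^3 + c n / ((c n)^2 + 1) /\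
     - 3 * b n * c n + sqrt ((c n)^2 + 1) * (1 - (c n)^2) = 0).

Section EquilibriumRecursion.

Variables (a b c : nat -> R) (N : nat).
Hypothesis Hrec : equilibrium_recursion a b c N.

Lemma c_pos n : (1 <= n <= N)%nat -> 0 < c n.
Proof. destruct Hrec as [Hc _]; apply Hc. Qed.

Lemma first_order_condition n : (1 <= n <= N - 1)%nat ->
  - 3 * b n * c n + sqrt (c n ^ 2 + 1) * (1 - c n ^ 2) = 0.
Proof. destruct Hrec as [_ [_ [_ [_ Hstep]]]]; intros Hn; apply (Hstep n Hn). Qed.

Lemma closed_form_step n : (1 <= n <= N - 1)%nat ->
  b n = sqrt (c n ^ 2 + 1) * (1 - c n ^ 2) / (3 * c n) /\
  b (n - 1)%nat = (1 + 2 * c n ^ 2) / (3 * c n * (1 + c n ^ 2)) /\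
  a (n - 1)%nat - b (n - 1)%nat / 2 =
    (a n - b n / 2) / sqrt (c n ^ 2 + 1) - c n ^ 3 / (2 * (1 + c n ^ 2)).
Proof.
  destruct Hrec as [_ [_ [_ [_ Hstep]]]]; intros Hn.
  destruct (Hstep n Hn) as [Ea [Eb Efoc]].
  exact (step_closed_form _ _ _ _ _ (c_pos n ltac:(lia)) Ea Eb Efoc).
Qed.

Lemma b_pos n : (n <= N - 1)%nat -> 0 < b n.
Proof.
  intros Hn; destruct (Nat.eq_dec n (N - 1)) as [-> | Hne].
  - destruct Hrec as [_ [_ [-> _]]]; lra.
  - destruct (closed_form_step (S n) ltac:(lia)) as [_ [Eb _]].
    rewrite Nat.sub_succ, Nat.sub_0_r in Eb; rewrite Eb.
    assert (0 < c (S n)) by (apply c_pos; lia).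
    apply Rdiv_lt_0_compat; nra.
Qed.

Lemma c_sq_step n : (1 <= n <= N - 1)%nat -> 0 < c n ^ 2 < 1.
Proof.
  intros Hn; pose proof (c_pos n ltac:(lia)) as Hc.
  destruct (closed_form_step n Hn) as [Eb _].
  split; [nra | exact (step_c_sq_lt_1 _ _ Hc (b_pos n ltac:(lia)) Eb)].
Qed.

Lemma b_sq_step n : (1 <= n <= N - 1)%nat ->
  b n ^ 2 = b_sq_of (c n ^ 2) /\ b (n - 1)%nat ^ 2 = b_prev_sq_of (c n ^ 2).
Proof.
  intros Hn; destruct (closed_form_step n Hn) as [Ebn [Ebm _]].
  exact (step_b_sq _ _ _ (c_pos n ltac:(lia)) Ebn Ebm).
Qed.

Lemma b_sq_gap_step n : (1 <= n <= N - 1)%nat ->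
  b n ^ 2 + 1/4 <= b (n - 1)%nat ^ 2 /\
  b n ^ 2 + 1/3 - (c n ^ 2)^2 / 3 <= b (n - 1)%nat ^ 2 <= b n ^ 2 + 1/3.
Proof.
  intros Hn; destruct (b_sq_step n Hn) as [-> ->].
  exact (b_sq_gap_bounds _ (c_sq_step n Hn)).
Qed.

Lemma c_sq_mul_b_sq_step n : (1 <= n <= N - 1)%nat -> c n ^ 2 * b n ^ 2 <= 1/9.
Proof.
  intros Hn; destruct (b_sq_step n Hn) as [-> _].
  exact (mul_b_sq_of_le _ (c_sq_step n Hn)).
Qed.

Lemma b_last : b (N - 1)%nat = 1/2.
Proof. destruct Hrec as [_ [_ [Hb _]]]; exact Hb. Qed.

Lemma quarter_le_b_sq n : (n <= N - 1)%nat -> 1/4 <= b n ^ 2.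
Proof.
  intros Hn.
  assert (T : b (N - 1)%nat ^ 2 + INR (N - 1 - n) * 0 <= b n ^ 2).
  { apply (telescope_from_last N (fun k => b k ^ 2)); [| exact Hn].
    intros k Hk; pose proof (b_sq_gap_step k Hk); lra. }
  rewrite b_last in T; lra.
Qed.

Lemma b_sq_le n : (n <= N - 1)%nat -> b n ^ 2 <= 1/4 + INR (N - 1 - n) / 3.
Proof.
  intros Hn.
  assert (T : - b (N - 1)%nat ^ 2 + INR (N - 1 - n) * (- 1/3) <= - b n ^ 2).
  { apply (telescope_from_last N (fun k => - b k ^ 2)); [| exact Hn].
    intros k Hk; pose proof (b_sq_gap_step k Hk); lra. }
  rewrite b_last in T; lra.
Qed.

(* The potential [X - 1/(20 X)] grows by at least 1/3 per step although [b^2] itself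
   may grow by less; the defect [(c^2)^2/3] is absorbed by [1/(20 X)]. *)
Lemma b_sq_ge n : (n <= N - 1)%nat -> 1/20 + INR (N - 1 - n) / 3 <= b n ^ 2.
Proof.
  intros Hn.
  assert (T : b (N - 1)%nat ^ 2 - (1/20) / b (N - 1)%nat ^ 2 + INR (N - 1 - n) * (1/3)
              <= b n ^ 2 - (1/20) / b n ^ 2).
  { apply (telescope_from_last N (fun k => b k ^ 2 - (1/20) / b k ^ 2)); [| exact Hn].
    intros k Hk; destruct (b_sq_gap_step k Hk) as [Hlo [Hdef _]].
    apply (potential_step _ _ (c k ^ 2)); try lra.
    - apply quarter_le_b_sq; lia.
    - pose proof (c_sq_step k Hk); lra.
    - pose proof (c_sq_mul_b_sq_step k Hk); lra. }
  rewrite b_last in T.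
  assert (0 <= (1/20) / b n ^ 2).
  { pose proof (quarter_le_b_sq n Hn); apply Rle_mult_inv_pos; lra. }
  replace ((1/20) / (1/2) ^ 2) with (1/5) in T by field; lra.
Qed.

Lemma a_sub_half_b_bound n : (n <= N - 1)%nat -> Rabs (a n - b n / 2) <= 9/4.
Proof.
  intros Hn.
  assert (T : - (Rabs (a (N - 1)%nat - b (N - 1)%nat / 2) + / b (N - 1)%nat) + INR (N - 1 - n) * 0
              <= - (Rabs (a n - b n / 2) + / b n)).
  { apply (telescope_from_last N (fun k => - (Rabs (a k - b k / 2) + / b k))); [| exact Hn].
    intros k Hk; destruct (closed_form_step k Hk) as [_ [_ Ee]].
    pose proof (abs_step_le _ _ _ (c_pos k ltac:(lia)) Ee).
    assert (c k ^ 3 / 2 <= / b k - / b (k - 1)%nat).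
    { apply cube_half_le_inv_sub; try (apply b_pos || apply c_pos; lia).
      - apply quarter_le_b_sq; lia.
      - pose proof (b_sq_gap_step k Hk); lra.
      - apply c_sq_mul_b_sq_step, Hk. }
    lra. }
  destruct Hrec as [_ [Ha _]]; rewrite Ha, b_last in T.
  replace (0 - 1/2/2) with (- (1/4)) in T by field.
  rewrite Rabs_Ropp, Rabs_right in T by lra.
  assert (0 < / b n) by (apply Rinv_0_lt_compat, b_pos, Hn).
  replace (/ (1/2)) with 2 in T by field; lra.
Qed.

Lemma Sigma_step_bounds (S0 : R) k : 0 < S0 -> (1 <= k <= N - 1)%nat ->
  Sigma S0 c (k - 1) ^ 3 / b (k - 1)%nat ^ 2 <= Sigma S0 c k ^ 3 / b k ^ 2 /\
  Sigma S0 c k ^ 3 / b k ^ 2 * exp (- (8 / b k ^ 2)) <=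
  Sigma S0 c (k - 1) ^ 3 / b (k - 1)%nat ^ 2 * exp (- (8 / b (k - 1)%nat ^ 2)).
Proof.
  intros HS Hk.
  destruct (b_sq_step k Hk) as [Ebn Ebm].
  pose proof (c_sq_step k Hk) as Hu.
  pose proof (quarter_le_b_sq k ltac:(lia)) as Hq.
  pose proof (c_sq_mul_b_sq_step k Hk) as Hub.
  destruct (b_sq_gap_step k Hk) as [Hlo [_ Hhi]].
  assert (Hu49 : c k ^ 2 <= 4/9) by nra.
  pose proof (b_prev_sq_ratio_bounds (c k ^ 2) ltac:(lra)) as Hratio.
  rewrite <- Ebn, <- Ebm in Hratio.
  destruct k as [| m]; [lia |]; rewrite Nat.sub_succ, Nat.sub_0_r in *.
  change (Sigma S0 c (S m)) with (Sigma S0 c m / (1 + c (S m) ^ 2)).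
  apply Sigma_potential_step; try lra.
  - apply Sigma_pos, HS.
  - apply sixty_cube_le_inv_sub; lra.
Qed.

Lemma Sigma_cube_div_b_sq_bounds (S0 : R) n : 0 < S0 -> (n <= N - 1)%nat ->
  S0 ^ 3 / b 0%nat ^ 2 <= Sigma S0 c n ^ 3 / b n ^ 2 <= S0 ^ 3 / b 0%nat ^ 2 * exp (8 / b n ^ 2).
Proof.
  intros HS Hn.
  assert (H0 : 0 <= S0 ^ 3 / b 0%nat ^ 2).
  { pose proof (quarter_le_b_sq 0 ltac:(lia)); apply Rle_mult_inv_pos; [apply pow_le |]; lra. }
  split.
  - enough (- (Sigma S0 c n ^ 3 / b n ^ 2) <= - (Sigma S0 c 0 ^ 3 / b 0%nat ^ 2))
      by (simpl in *; lra).
    apply (le_first_of_steps N (fun k => - (Sigma S0 c k ^ 3 / b k ^ 2))); [| exact Hn].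
    intros k Hk; destruct (Sigma_step_bounds S0 k HS Hk); lra.
  - assert (Hdecr : Sigma S0 c n ^ 3 / b n ^ 2 * exp (- (8 / b n ^ 2)) <=
                    Sigma S0 c 0 ^ 3 / b 0%nat ^ 2 * exp (- (8 / b 0%nat ^ 2))).
    { apply (le_first_of_steps N (fun k => Sigma S0 c k ^ 3 / b k ^ 2 * exp (- (8 / b k ^ 2))));
        [| exact Hn].
      intros k Hk; destruct (Sigma_step_bounds S0 k HS Hk); lra. }
    assert (exp (- (8 / b 0%nat ^ 2)) <= 1).
    { rewrite <- exp_0; apply exp_le_compat.
      pose proof (quarter_le_b_sq 0 ltac:(lia)).
      assert (0 <= 8 / b 0%nat ^ 2) by (apply Rle_mult_inv_pos; lra); lra. }
    simpl Sigma in Hdecr.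
    replace (Sigma S0 c n ^ 3 / b n ^ 2) with
      (Sigma S0 c n ^ 3 / b n ^ 2 * exp (- (8 / b n ^ 2)) * exp (8 / b n ^ 2))
      by (rewrite Rmult_assoc, <- exp_plus, Rplus_opp_l, exp_0; ring).
    apply Rmult_le_compat_r; [left; apply exp_pos |].
    apply (Rle_trans _ _ _ Hdecr); rewrite <- (Rmult_1_r (S0 ^ 3 / b 0%nat ^ 2)) at 2.
    apply Rmult_le_compat_l; lra.
Qed.

End EquilibriumRecursion.

Lemma Rpower_third_pow3 (x : R) : 0 < x -> Rpower x (1/3) ^ 3 = x.
Proof.
  intros Hx; rewrite <- Rpower_pow by apply exp_pos.
  rewrite Rpower_mult; replace (1/3 * INR 3) with 1 by (simpl; lra); apply Rpower_1, Hx.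
Qed.

Lemma sqrt_Rpower (x y : R) : sqrt (Rpower x y) = Rpower x (y / 2).
Proof. rewrite <- Rpower_sqrt by apply exp_pos; rewrite Rpower_mult; f_equal; field. Qed.

Lemma sqrt_3_div_3 : sqrt 3 / 3 = / sqrt 3.
Proof.
  assert (E : sqrt 3 * sqrt 3 = 3) by (apply sqrt_sqrt; lra).
  assert (0 < sqrt 3) by (apply sqrt_lt_R0; lra).
  set (s := sqrt 3) in *; clearbody s; rewrite <- E; field; lra.
Qed.

Lemma sqrt_div_3 (x : R) : 0 <= x -> sqrt (x / 3) = sqrt 3 / 3 * sqrt x.
Proof.
  intros Hx; rewrite sqrt_div_alt, sqrt_3_div_3 by lra.
  field; apply Rgt_not_eq, sqrt_lt_R0; lra.
Qed.

Lemma is_lim_seq_inv_INR : is_lim_seq (fun N => / INR N) 0.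
Proof. apply (is_lim_seq_inv _ _ is_lim_seq_INR); discriminate. Qed.

Lemma dt_pos (N : nat) : (1 <= N)%nat -> 0 < dt N.
Proof. intros HN; apply Rinv_0_lt_compat, lt_0_INR; lia. Qed.

Lemma is_lim_seq_sqrt_dt : is_lim_seq (fun N => sqrt (dt N)) 0.
Proof.
  rewrite <- sqrt_0; apply (is_lim_seq_continuous sqrt (fun N => / INR N) 0).
  - apply continuity_pt_sqrt; lra.
  - apply is_lim_seq_inv_INR.
Qed.

Lemma is_lim_seq_div_INR (y : nat -> R) (L B : R) :
  eventually (fun N => L * INR N - B <= y N <= L * INR N + B) ->
  is_lim_seq (fun N => y N / INR N) L.
Proof.
  intros Hev.
  assert (HB : is_lim_seq (fun N => B * / INR N) 0).
  { pose proof (is_lim_seq_mult' _ _ _ _ (is_lim_seq_const B) is_lim_seq_inv_INR) as H.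
    rewrite Rmult_0_r in H; exact H. }
  apply is_lim_seq_le_le_loc with (fun N => L - B * / INR N) (fun N => L + B * / INR N).
  - apply (filter_imp (fun N => (1 <= N)%nat /\ L * INR N - B <= y N <= L * INR N + B)).
    + intros N [HN Hy]; apply le_INR in HN; simpl in HN.
      replace (L - B * / INR N) with ((L * INR N - B) / INR N) by (field; lra).
      replace (L + B * / INR N) with ((L * INR N + B) / INR N) by (field; lra).
      split; apply Rmult_le_compat_r; try (left; apply Rinv_0_lt_compat); lra.
    + apply filter_and; [exists 1%nat; intros N HN; exact HN | exact Hev].
  - pose proof (is_lim_seq_minus' _ _ _ _ (is_lim_seq_const L) HB) as H.
    rewrite Rminus_0_r in H; exact H.
  - pose proof (is_lim_seq_plus' _ _ _ _ (is_lim_seq_const L) HB) as H.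
    rewrite Rplus_0_r in H; exact H.
Qed.

Lemma is_lim_seq_affine_p_infty (v : nat -> R) (A B : R) : 0 < A ->
  is_lim_seq v p_infty -> is_lim_seq (fun n => A * v n + B) p_infty.
Proof.
  intros HA Hv; apply is_lim_seq_spec in Hv; apply is_lim_seq_spec.
  intros M; destruct (Hv ((M - B) / A)) as [N0 HN0]; exists N0; intros n Hn.
  specialize (HN0 n Hn); apply (Rmult_lt_compat_l A) in HN0; [| exact HA].
  replace (A * ((M - B) / A)) with (M - B) in HN0 by (field; lra); lra.
Qed.

Lemma is_lim_seq_sqrt_p_infty (x : nat -> R) :
  is_lim_seq x p_infty -> is_lim_seq (fun n => sqrt (x n)) p_infty.
Proof.
  intros Hx; apply is_lim_seq_spec in Hx; apply is_lim_seq_spec.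
  intros M; set (M' := Rmax M 0 + 1).
  assert (HM' : 0 < M' /\ M < M')
    by (unfold M'; pose proof (Rmax_l M 0); pose proof (Rmax_r M 0); lra).
  destruct (Hx (M' ^ 2)) as [N0 HN0]; exists N0; intros n Hn.
  rewrite <- (sqrt_pow2 M') in HM' by lra.
  specialize (HN0 n Hn).
  assert (sqrt (M' ^ 2) < sqrt (x n)) by (apply sqrt_lt_1; nra).
  lra.
Qed.

Lemma abs_sub_le_cube (x L : R) : 0 < x -> 0 < L -> Rabs (x - L) <= Rabs (x ^ 3 - L ^ 3) / L ^ 2.
Proof.
  intros Hx HL.
  replace (x ^ 3 - L ^ 3) with ((x - L) * (x ^ 2 + x * L + L ^ 2)) by ring.
  rewrite Rabs_mult, (Rabs_right (x ^ 2 + x * L + L ^ 2)) by nra.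
  apply Rle_div_r; [nra |].
  apply Rmult_le_compat_l; [apply Rabs_pos | nra].
Qed.

Lemma is_lim_seq_of_pow3 (x : nat -> R) (L : R) : 0 < L -> eventually (fun n => 0 < x n) ->
  is_lim_seq (fun n => x n ^ 3) (L ^ 3) -> is_lim_seq x L.
Proof.
  intros HL Hpos Hx.
  assert (H0 : is_lim_seq (fun n => Rabs (x n ^ 3 - L ^ 3) / L ^ 2) 0).
  { replace 0 with (Rabs (L ^ 3 - L ^ 3) / L ^ 2) by (rewrite Rminus_diag, Rabs_R0; field; lra).
    apply is_lim_seq_div'; [| apply is_lim_seq_const | apply pow_nonzero; lra].
    apply (is_lim_seq_abs _ (L ^ 3 - L ^ 3)), is_lim_seq_minus';
      [exact Hx | apply is_lim_seq_const]. }
  apply is_lim_seq_le_le_loc with (fun n => L - Rabs (x n ^ 3 - L ^ 3) / L ^ 2)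
    (fun n => L + Rabs (x n ^ 3 - L ^ 3) / L ^ 2).
  - apply (filter_imp (fun n => 0 < x n)); [| exact Hpos].
    intros n Hxn; pose proof (abs_sub_le_cube _ _ Hxn HL).
    pose proof (Rle_abs (x n - L)); pose proof (Rle_abs (L - x n)).
    pose proof (Rabs_minus_sym (x n) L).
    lra.
  - pose proof (is_lim_seq_minus' _ _ _ _ (is_lim_seq_const L) H0) as H.
    rewrite Rminus_0_r in H; exact H.
  - pose proof (is_lim_seq_plus' _ _ _ _ (is_lim_seq_const L) H0) as H.
    rewrite Rplus_0_r in H; exact H.
Qed.

Lemma idx_bounds (N : nat) (t : R) : 0 < t -> INR N * t - 1 < INR (idx N t) <= INR N * t.
Proof.
  intros Ht; unfold idx; set (x := INR N * t).
  assert (Hx : 0 <= x) by (unfold x; pose proof (pos_INR N); nra).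
  destruct (base_Int_part x) as [H1 H2].
  assert (Hz : (0 <= Int_part x)%Z).
  { assert (Hgt : IZR (-1) < IZR (Int_part x)) by lra; apply lt_IZR in Hgt; lia. }
  rewrite INR_IZR_INZ, Z2Nat.id by exact Hz; lra.
Qed.

Lemma eventually_idx_range (t : R) : 0 < t < 1 ->
  eventually (fun N => (1 <= idx N t <= N - 1)%nat).
Proof.
  intros Ht; destruct (archimed_cor1 t ltac:(lra)) as [N0 [HN0t HN0]].
  assert (HN0r : 0 < INR N0) by (apply lt_0_INR; lia).
  exists N0; intros N HN; apply le_INR in HN.
  assert (H1 : 1 < INR N * t).
  { apply (Rmult_lt_compat_l (INR N0)) in HN0t; [| exact HN0r].
    rewrite Rinv_r in HN0t by lra; nra. }
  destruct (idx_bounds N t ltac:(lra)) as [Hlo Hhi].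
  assert (HNpos : (1 <= N)%nat) by (apply INR_le; simpl; pose proof (pos_INR N); nra).
  split.
  - destruct (idx N t) as [| k]; [simpl in Hlo; lra | lia].
  - apply INR_le; rewrite minus_INR by exact HNpos; simpl.
    assert (INR (idx N t) < INR N) by nra.
    assert (INR (idx N t) + 1 <= INR N); [| lra].
    rewrite <- S_INR; apply le_INR, INR_lt; exact H.
Qed.

Section Asymptotics.

Variables (a b c : nat -> nat -> R) (t : R).
Hypothesis Ht : 0 < t < 1.
Hypothesis Hrec : forall N : nat, (1 <= N)%nat -> equilibrium_recursion (a N) (b N) (c N) N.

Local Notation m N := (idx N t).

Lemma eventually_recursion_at_idx :
  eventually (fun N => equilibrium_recursion (a N) (b N) (c N) N /\ (1 <= m N <= N - 1)%nat).
Proof.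
  eapply filter_imp; [| apply eventually_idx_range, Ht].
  intros N Hm; cbv beta in Hm; split; [apply Hrec; lia | exact Hm].
Qed.

Lemma eventually_b_sq_bounds : eventually (fun N =>
  (INR N * (1 - t) - 1) / 3 <= b N (m N) ^ 2 <= INR N * (1 - t) / 3 + 1/4 /\
  (INR N - 1) / 3 <= b N 0%nat ^ 2 <= (INR N - 1) / 3 + 1/4).
Proof.
  eapply filter_imp; [| exact eventually_recursion_at_idx]; intros N [HrecN Hm].
  destruct (idx_bounds N t ltac:(lra)) as [Hlo Hhi].
  pose proof (b_sq_le _ _ _ N HrecN (m N) ltac:(lia)).
  pose proof (b_sq_ge _ _ _ N HrecN (m N) ltac:(lia)).
  pose proof (b_sq_le _ _ _ N HrecN 0 ltac:(lia)).
  pose proof (b_sq_ge _ _ _ N HrecN 0 ltac:(lia)).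
  rewrite Nat.sub_0_r, !minus_INR in * by lia; simpl INR in *.
  repeat split; lra.
Qed.

Lemma eventually_b_pos : eventually (fun N => 0 < b N (m N)).
Proof.
  eapply filter_imp; [| exact eventually_recursion_at_idx]; intros N [HrecN Hm].
  apply (b_pos _ _ _ _ HrecN); lia.
Qed.

Lemma lim_b_sq_div_N : is_lim_seq (fun N => b N (m N) ^ 2 / INR N) ((1 - t) / 3).
Proof.
  apply is_lim_seq_div_INR with (B := 1).
  eapply filter_imp; [| exact eventually_b_sq_bounds]; intros N Hb; lra.
Qed.

Lemma lim_b0_sq_div_N : is_lim_seq (fun N => b N 0%nat ^ 2 / INR N) (1 / 3).
Proof.
  apply is_lim_seq_div_INR with (B := 1).
  eapply filter_imp; [| exact eventually_b_sq_bounds]; intros N Hb; lra.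
Qed.

Lemma lim_b_mul_sqrt_dt : is_lim_seq (fun N => b N (m N) * sqrt (dt N)) (sqrt 3 / 3 * sqrt (1 - t)).
Proof.
  rewrite <- sqrt_div_3 by lra.
  apply is_lim_seq_ext_loc with (fun N => sqrt (b N (m N) ^ 2 / INR N)).
  - eapply filter_imp; [| exact eventually_b_pos]; intros N Hb.
    unfold dt, Rdiv; rewrite sqrt_mult_alt, sqrt_pow2 by (apply pow2_ge_0 || lra); reflexivity.
  - apply is_lim_seq_continuous; [apply continuity_pt_sqrt; lra | exact lim_b_sq_div_N].
Qed.

Lemma lim_b : is_lim_seq (fun N => b N (m N)) p_infty.
Proof.
  apply is_lim_seq_le_p_loc with (fun N => sqrt ((1 - t) / 3 * INR N + - (1/3))).
  - apply (filter_imp (fun N => 0 < b N (m N) /\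
      (INR N * (1 - t) - 1) / 3 <= b N (m N) ^ 2)).
    + intros N [Hb Hb2]; rewrite <- (sqrt_pow2 (b N (m N))) by lra.
      apply sqrt_le_1_alt; lra.
    + apply filter_and; [exact eventually_b_pos |].
      eapply filter_imp; [| exact eventually_b_sq_bounds]; intros N Hb; lra.
  - apply is_lim_seq_sqrt_p_infty, is_lim_seq_affine_p_infty, is_lim_seq_INR; lra.
Qed.

Lemma lim_inv_b : is_lim_seq (fun N => / b N (m N)) 0.
Proof. apply (is_lim_seq_inv _ _ lim_b); discriminate. Qed.

Lemma lim_c : is_lim_seq (fun N => c N (m N)) 0.
Proof.
  apply is_lim_seq_le_le_loc with (fun _ => 0) (fun N => 1/3 * / b N (m N)).
  - eapply filter_imp; [| exact eventually_recursion_at_idx]; intros N [HrecN Hm].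
    pose proof (c_pos _ _ _ _ HrecN (m N) ltac:(lia)) as Hc.
    pose proof (b_pos _ _ _ _ HrecN (m N) ltac:(lia)) as Hb.
    pose proof (c_sq_mul_b_sq_step _ _ _ _ HrecN (m N) Hm) as Hcb.
    split; [lra |].
    replace (1/3 * / b N (m N)) with ((1/3) / b N (m N)) by (field; lra).
    apply Rle_div_r; [lra | nra].
  - apply is_lim_seq_const.
  - pose proof (is_lim_seq_mult' _ _ _ _ (is_lim_seq_const (1/3)) lim_inv_b) as H.
    rewrite Rmult_0_r in H; exact H.
Qed.

Lemma lim_c_sq : is_lim_seq (fun N => c N (m N) ^ 2) 0.
Proof.
  apply is_lim_seq_ext with (fun N => c N (m N) * c N (m N)); [intros N; ring |].
  pose proof (is_lim_seq_mult' _ _ _ _ lim_c lim_c) as H; rewrite Rmult_0_r in H; exact H.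
Qed.

Lemma lim_c_div_sqrt_dt :
  is_lim_seq (fun N => c N (m N) / sqrt (dt N)) (sqrt 3 / 3 * (1 / sqrt (1 - t))).
Proof.
  assert (Hnum : is_lim_seq (fun N => sqrt (c N (m N) ^ 2 + 1) * (1 - c N (m N) ^ 2)) 1).
  { pose proof (is_lim_seq_plus' _ _ _ _ lim_c_sq (is_lim_seq_const 1)) as Hs.
    apply (is_lim_seq_continuous sqrt) in Hs; [| apply continuity_pt_sqrt; lra].
    pose proof (is_lim_seq_minus' _ _ _ _ (is_lim_seq_const 1) lim_c_sq) as H1.
    pose proof (is_lim_seq_mult' _ _ _ _ Hs H1) as H.
    rewrite Rplus_0_l, sqrt_1, Rminus_0_r, Rmult_1_r in H; exact H. }
  pose proof (is_lim_seq_mult' _ _ _ _ (is_lim_seq_const 3) lim_b_mul_sqrt_dt) as Hden.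
  assert (Hs3 : 0 < sqrt 3) by (apply sqrt_lt_R0; lra).
  assert (Hs1 : 0 < sqrt (1 - t)) by (apply sqrt_lt_R0; lra).
  pose proof (is_lim_seq_div' _ _ _ _ Hnum Hden ltac:(nra)) as H.
  replace (sqrt 3 / 3 * (1 / sqrt (1 - t))) with (1 / (3 * (sqrt 3 / 3 * sqrt (1 - t))))
    by (rewrite sqrt_3_div_3 at 1; field; lra).
  apply is_lim_seq_ext_loc with (2 := H).
  eapply filter_imp; [| exact eventually_recursion_at_idx]; intros N [HrecN Hm].
  pose proof (sqrt_lt_R0 _ (dt_pos N ltac:(lia))) as Hsd.
  pose proof (first_order_condition _ _ _ _ HrecN (m N) Hm) as Hfoc.
  pose proof (b_pos _ _ _ _ HrecN (m N) ltac:(lia)) as Hb.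
  replace (sqrt (c N (m N) ^ 2 + 1) * (1 - c N (m N) ^ 2)) with (3 * b N (m N) * c N (m N)) by lra.
  field; lra.
Qed.

Lemma lim_a : is_lim_seq (fun N => a N (m N)) p_infty.
Proof.
  apply is_lim_seq_le_p_loc with (fun N => 1/2 * b N (m N) + - (9/4)).
  - eapply filter_imp; [| exact eventually_recursion_at_idx]; intros N [HrecN Hm].
    pose proof (a_sub_half_b_bound _ _ _ _ HrecN (m N) ltac:(lia)) as He.
    pose proof (Rle_abs (- (a N (m N) - b N (m N) / 2))); rewrite Rabs_Ropp in *; lra.
  - apply is_lim_seq_affine_p_infty; [lra | exact lim_b].
Qed.

Lemma lim_a_mul_sqrt_dt : is_lim_seq (fun N => a N (m N) * sqrt (dt N)) (sqrt 3 / 6 * sqrt (1 - t)).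
Proof.
  assert (Herr : is_lim_seq (fun N => (a N (m N) - b N (m N) / 2) * sqrt (dt N)) 0).
  { apply is_lim_seq_le_le_loc with (fun N => - (9/4) * sqrt (dt N)) (fun N => 9/4 * sqrt (dt N)).
    - eapply filter_imp; [| exact eventually_recursion_at_idx]; intros N [HrecN Hm].
      pose proof (sqrt_lt_R0 _ (dt_pos N ltac:(lia))) as Hsd.
      pose proof (a_sub_half_b_bound _ _ _ _ HrecN (m N) ltac:(lia)) as He.
      pose proof (Rle_abs (a N (m N) - b N (m N) / 2)).
      pose proof (Rle_abs (- (a N (m N) - b N (m N) / 2))); rewrite Rabs_Ropp in *.
      split; nra.
    - pose proof (is_lim_seq_mult' _ _ _ _ (is_lim_seq_const (- (9/4))) is_lim_seq_sqrt_dt) as H.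
      rewrite Rmult_0_r in H; exact H.
    - pose proof (is_lim_seq_mult' _ _ _ _ (is_lim_seq_const (9/4)) is_lim_seq_sqrt_dt) as H.
      rewrite Rmult_0_r in H; exact H. }
  pose proof (is_lim_seq_mult' _ _ _ _ lim_b_mul_sqrt_dt (is_lim_seq_const (1/2))) as Hhalf.
  pose proof (is_lim_seq_plus' _ _ _ _ Hhalf Herr) as H.
  replace (sqrt 3 / 6 * sqrt (1 - t)) with (sqrt 3 / 3 * sqrt (1 - t) * (1/2) + 0) by field.
  apply is_lim_seq_ext with (2 := H); intros N; field.
Qed.

Lemma lim_b_sq_ratio : is_lim_seq (fun N => b N (m N) ^ 2 / b N 0%nat ^ 2) (1 - t).
Proof.
  pose proof (is_lim_seq_div' _ _ _ _ lim_b_sq_div_N lim_b0_sq_div_N ltac:(lra)) as H.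
  replace (1 - t) with ((1 - t) / 3 / (1 / 3)) by field.
  apply is_lim_seq_ext_loc with (2 := H).
  eapply filter_imp; [| exact eventually_recursion_at_idx]; intros N [HrecN Hm].
  pose proof (b_pos _ _ _ _ HrecN 0 ltac:(lia)).
  assert (0 < INR N) by (apply lt_0_INR; lia).
  field; split; lra.
Qed.

Lemma lim_exp_inv_b_sq : is_lim_seq (fun N => exp (8 / b N (m N) ^ 2)) 1.
Proof.
  pose proof (is_lim_seq_mult' _ _ _ _ (is_lim_seq_const 8)
                (is_lim_seq_mult' _ _ _ _ lim_inv_b lim_inv_b)) as H.
  apply (is_lim_seq_continuous exp) in H; [| apply derivable_continuous_pt, derivable_pt_exp].
  rewrite !Rmult_0_r, exp_0 in H.
  apply is_lim_seq_ext_loc with (2 := H).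
  eapply filter_imp; [| exact eventually_b_pos]; intros N Hb.
  f_equal; field; lra.
Qed.

Variable S0 : R.
Hypothesis HS0 : 0 < S0.

Lemma lim_Sigma : is_lim_seq (fun N => Sigma S0 (c N) (m N)) (Rpower (1 - t) (1/3) * S0).
Proof.
  apply is_lim_seq_of_pow3.
  - apply Rmult_lt_0_compat; [apply exp_pos | exact HS0].
  - exists 0%nat; intros N _; apply Sigma_pos, HS0.
  - rewrite Rpow_mult_distr, Rpower_third_pow3, Rmult_comm by lra.
    apply is_lim_seq_le_le_loc with (fun N => S0 ^ 3 * (b N (m N) ^ 2 / b N 0%nat ^ 2))
      (fun N => S0 ^ 3 * (b N (m N) ^ 2 / b N 0%nat ^ 2) * exp (8 / b N (m N) ^ 2)).
    + eapply filter_imp; [| exact eventually_recursion_at_idx]; intros N [HrecN Hm].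
      destruct (Sigma_cube_div_b_sq_bounds _ _ _ _ HrecN S0 (m N) HS0 ltac:(lia)) as [Hlo Hhi].
      pose proof (b_pos _ _ _ _ HrecN (m N) ltac:(lia)).
      assert (Hb2 : 0 < b N (m N) ^ 2) by nra.
      apply (Rmult_le_compat_r (b N (m N) ^ 2)) in Hlo, Hhi; try lra.
      replace (Sigma S0 (c N) (m N) ^ 3 / b N (m N) ^ 2 * b N (m N) ^ 2)
        with (Sigma S0 (c N) (m N) ^ 3) in Hlo, Hhi by (field; lra).
      split; eapply Rle_trans; try eassumption; right; field;
        pose proof (b_pos _ _ _ _ HrecN 0 ltac:(lia)); lra.
    + apply is_lim_seq_mult'; [apply is_lim_seq_const | exact lim_b_sq_ratio].
    + pose proof (is_lim_seq_mult' _ _ _ _ (is_lim_seq_const (S0 ^ 3)) lim_b_sq_ratio) as H0.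
      pose proof (is_lim_seq_mult' _ _ _ _ H0 lim_exp_inv_b_sq) as H.
      rewrite Rmult_1_r in H; exact H.
Qed.

Lemma lim_Sigma_prev : is_lim_seq (fun N => Sigma S0 (c N) (m N - 1)) (Rpower (1 - t) (1/3) * S0).
Proof.
  pose proof (is_lim_seq_plus' _ _ _ _ (is_lim_seq_const 1) lim_c_sq) as H1.
  pose proof (is_lim_seq_mult' _ _ _ _ lim_Sigma H1) as H.
  rewrite Rplus_0_r, Rmult_1_r in H.
  apply is_lim_seq_ext_loc with (2 := H).
  eapply filter_imp; [| exact eventually_recursion_at_idx]; intros N [_ Hm].
  destruct (m N) as [| k]; [lia |]; rewrite Nat.sub_succ, Nat.sub_0_r; simpl Sigma.
  field; nra.
Qed.

Lemma lim_sqrt_Sigma_prev :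
  is_lim_seq (fun N => sqrt (Sigma S0 (c N) (m N - 1))) (Rpower (1 - t) (1/3/2) * sqrt S0).
Proof.
  rewrite <- sqrt_Rpower, <- sqrt_mult_alt by (left; apply exp_pos).
  apply is_lim_seq_continuous; [apply continuity_pt_sqrt | exact lim_Sigma_prev].
  apply Rmult_le_pos; [left; apply exp_pos | lra].
Qed.

Variable su : R.
Hypothesis Hsu : 0 < su.

Lemma lim_beta_div_dt : is_lim_seq (fun N => beta N S0 su (c N) (m N) / dt N)
  (sqrt 3 * su / (3 * Rpower (1 - t) (2/3) * sqrt S0)).
Proof.
  assert (Hq : 0 < Rpower (1 - t) (1/3/2) * sqrt S0)
    by (apply Rmult_lt_0_compat; [apply exp_pos | apply sqrt_lt_R0, HS0]).
  pose proof (is_lim_seq_mult' _ _ _ _ lim_c_div_sqrt_dt (is_lim_seq_const su)) as Hnum.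
  pose proof (is_lim_seq_div' _ _ _ _ Hnum lim_sqrt_Sigma_prev ltac:(lra)) as H.
  replace (sqrt 3 * su / (3 * Rpower (1 - t) (2/3) * sqrt S0))
    with (sqrt 3 / 3 * (1 / sqrt (1 - t)) * su / (Rpower (1 - t) (1/3/2) * sqrt S0)).
  2: { rewrite <- (Rpower_sqrt (1 - t)) by lra.
       replace (2/3) with (/2 + 1/3/2) by field; rewrite Rpower_plus.
       assert (0 < Rpower (1 - t) (/2)) by apply exp_pos.
       assert (0 < Rpower (1 - t) (1/3/2)) by apply exp_pos.
       assert (0 < sqrt S0) by (apply sqrt_lt_R0, HS0).
       field; repeat split; lra. }
  apply is_lim_seq_ext_loc with (2 := H).
  exists 1%nat; intros N HN; unfold beta.
  pose proof (dt_pos N HN) as Hdt; pose proof (sqrt_lt_R0 _ Hdt) as Hsd.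
  pose proof (sqrt_lt_R0 _ (Sigma_pos S0 (c N) (m N - 1) HS0)) as Hs.
  assert (Edt : dt N = sqrt (dt N) * sqrt (dt N)) by (rewrite sqrt_sqrt; lra).
  set (sd := sqrt (dt N)) in *; clearbody sd; rewrite Edt.
  field; lra.
Qed.

Lemma lim_lambda : is_lim_seq (fun N => lambda N S0 su (c N) (m N))
  (sqrt 3 * sqrt S0 / (3 * Rpower (1 - t) (1/3) * su)).
Proof.
  pose proof (is_lim_seq_mult' _ _ _ _ lim_c_div_sqrt_dt lim_sqrt_Sigma_prev) as Hnum.
  pose proof (is_lim_seq_mult' _ _ _ _ (is_lim_seq_const su)
                (is_lim_seq_plus' _ _ _ _ (is_lim_seq_const 1) lim_c_sq)) as Hden.
  pose proof (is_lim_seq_div' _ _ _ _ Hnum Hden ltac:(rewrite Rplus_0_r, Rmult_1_r; lra)) as H.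
  replace (sqrt 3 * sqrt S0 / (3 * Rpower (1 - t) (1/3) * su))
    with (sqrt 3 / 3 * (1 / sqrt (1 - t)) * (Rpower (1 - t) (1/3/2) * sqrt S0) / (su * (1 + 0))).
  2: { rewrite <- (Rpower_sqrt (1 - t)) by lra.
       replace (/2) with (1/3/2 + 1/3) by field; rewrite Rpower_plus.
       assert (0 < Rpower (1 - t) (1/3)) by apply exp_pos.
       assert (0 < Rpower (1 - t) (1/3/2)) by apply exp_pos.
       field; repeat split; lra. }
  apply is_lim_seq_ext_loc with (2 := H).
  exists 1%nat; intros N HN; unfold lambda, beta.
  pose proof (dt_pos N HN) as Hdt; pose proof (sqrt_lt_R0 _ Hdt) as Hsd.
  pose proof (Sigma_pos S0 (c N) (m N - 1) HS0) as HSig.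
  assert (Edt : dt N = sqrt (dt N) * sqrt (dt N)) by (rewrite sqrt_sqrt; lra).
  assert (ESig : Sigma S0 (c N) (m N - 1) =
                 sqrt (Sigma S0 (c N) (m N - 1)) * sqrt (Sigma S0 (c N) (m N - 1)))
    by (rewrite sqrt_sqrt; lra).
  pose proof (sqrt_lt_R0 _ HSig) as Hq.
  set (sd := sqrt (dt N)) in *; set (q := sqrt (Sigma S0 (c N) (m N - 1))) in *; clearbody sd q.
  rewrite Edt, ESig.
  pose proof (pow2_ge_0 (c N (m N))); pose proof (pow2_ge_0 (c N (m N) * su * sd)).
  assert (0 < su ^ 2 * (sd * sd)) by (apply Rmult_lt_0_compat; nra).
  field; repeat split; lra.
Qed.

End Asymptotics.

Theorem theorem6 (a b c : nat -> nat -> R) (S0 su : R) :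
  0 < S0 -> 0 < su ->
  (forall N : nat, (1 <= N)%nat ->
     (forall n : nat, (1 <= n <= N)%nat -> 0 < c N n) /\
     a N (N - 1)%nat = 0 /\
     b N (N - 1)%nat = 1 / 2 /\
     c N N = 1 /\
     (forall n : nat, (1 <= n <= N - 1)%nat ->
        a N (n - 1)%nat =
          a N n * sqrt (1 / ((c N n)^2 + 1))
          + b N n * (sqrt (1 / ((c N n)^2 + 1)))^3 * (c N n)^2 /\
        b N (n - 1)%nat =
          b N n * (sqrt (1 / ((c N n)^2 + 1)))^3 + c N n / ((c N n)^2 + 1) /\
        - 3 * b N n * c N n + sqrt ((c N n)^2 + 1) * (1 - (c N n)^2) = 0)) ->
  forall t : R, 0 < t < 1 ->
    is_lim_seq (fun N => c N (idx N t)) 0 /\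
    is_lim_seq (fun N => b N (idx N t)) p_infty /\
    is_lim_seq (fun N => a N (idx N t)) p_infty /\
    is_lim_seq (fun N => c N (idx N t) / sqrt (dt N))
      (sqrt 3 / 3 * (1 / sqrt (1 - t))) /\
    is_lim_seq (fun N => b N (idx N t) * sqrt (dt N))
      (sqrt 3 / 3 * sqrt (1 - t)) /\
    is_lim_seq (fun N => a N (idx N t) * sqrt (dt N))
      (sqrt 3 / 6 * sqrt (1 - t)) /\
    is_lim_seq (fun N => Sigma S0 (c N) (idx N t))
      (Rpower (1 - t) (1 / 3) * S0) /\
    is_lim_seq (fun N => lambda N S0 su (c N) (idx N t))
      (sqrt 3 * sqrt S0 / (3 * Rpower (1 - t) (1 / 3) * su)) /\
    is_lim_seq (fun N => beta N S0 su (c N) (idx N t) / dt N)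
      (sqrt 3 * su / (3 * Rpower (1 - t) (2 / 3) * sqrt S0)).
Proof.
  intros HS0 Hsu Hrec t Ht.
  repeat split;
    [ eapply lim_c | eapply lim_b | eapply lim_a
    | eapply lim_c_div_sqrt_dt | eapply lim_b_mul_sqrt_dt | eapply lim_a_mul_sqrt_dt
    | eapply lim_Sigma | eapply lim_lambda | eapply lim_beta_div_dt ];
    eassumption.
Qed.
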